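(* Let $T$ be the Lr $(\mathbf a,\tau)$ interval exchange transformation, and assume that $\tau$ is irreducible and fully split and that $T$ satisfies the Keane Condition. Then the associated subshift $(X,S)$ has no doubly asymptotic pair of distinct points: if $\alpha,\beta\in X$ and there is $N\in\mathbb N$ with $\alpha_i=\beta_i$ for all $|i|\ge N$, then $\alpha=\beta$.
   Context: Fix $n\ge 2$, $[n]=\{1,\dots,n\}$, a vector $\mathbf a=(a_1,\dots,a_n)$ with all $a_i>0$ and $\sum_i a_i=1$, and a permutation $\tau$ of $[n]$. Put $b_0=0$, $b_i=\sum_{j=1}^i a_j$, $J_i=[b_{i-1},b_i)$, $\tilde J_i=(b_{i-1},b_i]$ for $i\in[n]$, and $D=\{b_1,\dots,b_{n-1}\}$. Put $b^\tau_0=0$, $b^\tau_i=\sum_{j=1}^i a_{\tau^{-1}(j)}$, $D^\tau=\{b^\tau_1,\dots,b^\tau_{n-1}\}$. The Lr $(\mathbf a,\tau)$ interval exchange transformation $T:[0,1)\to[0,1)$ and its dual $\tilde T:(0,1]\to(0,1]$ are defined by $x\mapsto x-b_{i-1}+b^\tau_{\tau(i)-1}$ for $x\in J_i$ (resp. $x\in\tilde J_i$); both are bijections. $\tau$ is irreducible if $\tau(\{1,\dots,j\})\ne\{1,\dots,j\}$ for $j=1,\dots,n-1$; split if $\tau(j+1)\ne\tau(j)+1$ for $j=1,\dots,n-1$; fully split if it is split and moreover $\tau(1)\ne\tau(n)+1$ and $\tau^{-1}(1)\ne\tau^{-1}(n)+1$. $T$ satisfies the Keane Condition if $D\cap T^k(D)=\emptyset$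 for all $k\in\mathbb N$. Let $\Omega=[n]^{\mathbb Z}$ with the product topology and shift $S(\alpha)_i=\alpha_{i+1}$. The itinerary maps $\mathcal I:[0,1)\to\Omega$, $\tilde{\mathcal I}:(0,1]\to\Omega$ are $\mathcal I(x)_k=i\iff T^kx\in J_i$ and $\tilde{\mathcal I}(x)_k=i\iff\tilde T^kx\in\tilde J_i$ ($k\in\mathbb Z$). Let $D_\infty=\{0,1\}\cup\bigcup_{k\in\mathbb Z}T^k(D)$, $R=[0,1]\setminus D_\infty$ (the regular points), $X_0=\mathcal I(R)$, and $X=\overline{X_0}$; $(X,S)$ is the associated subshift. *)

From Stdlib Require Import Reals ZArith Lra Lia.
Open Scope R_scope.

(* Data: n, lengths a : nat -> R (a i for i in 1..n), a permutation
   tau of {1..n} given together with its inverse tauinv. *)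

Definition is_perm (n : nat) (tau tauinv : nat -> nat) : Prop :=
  forall i, (1 <= i <= n)%nat ->
    (1 <= tau i <= n)%nat /\ (1 <= tauinv i <= n)%nat /\
    tauinv (tau i) = i /\ tau (tauinv i) = i.

Fixpoint bsum (a : nat -> R) (i : nat) : R :=
  match i with
  | O => 0
  | S k => bsum a k + a (S k)
  end.

Definition btau (a : nat -> R) (tauinv : nat -> nat) (i : nat) : R :=
  bsum (fun j => a (tauinv j)) i.

Definition inJ (a : nat -> R) (i : nat) (x : R) : Prop :=
  bsum a (i - 1) <= x < bsum a i.

(* T on [0,1): x in J_i  |->  x - b_{i-1} + b^tau_{tau(i)-1}.
   Tloop k x searches the interval index among 1..k (from k downward). *)
Fixpoint Tloop (a : nat -> R) (tau tauinv : nat -> nat) (k : nat) (x : R) : R :=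
  match k with
  | O => x
  | S k' => if Rle_dec (bsum a k') x
            then x - bsum a k' + btau a tauinv (tau (S k') - 1)
            else Tloop a tau tauinv k' x
  end.

Definition IET (n : nat) (a : nat -> R) (tau tauinv : nat -> nat) (x : R) : R :=
  Tloop a tau tauinv n x.

(* Tpow n a tau tauinv k x y  <->  T^k x = y  (k : Z), on [0,1);
   negative powers via the inverse of the bijection T. *)
Definition Tpow (n : nat) (a : nat -> R) (tau tauinv : nat -> nat)
  (k : Z) (x y : R) : Prop :=
  ((0 <= k)%Z /\ Nat.iter (Z.to_nat k) (IET n a tau tauinv) x = y) \/
  ((k < 0)%Z /\ 0 <= y < 1 /\
     Nat.iter (Z.to_nat (- k)) (IET n a tau tauinv) y = x).

Definition inD (n : nat) (a : nat -> R) (x : R) : Prop :=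
  exists i, (1 <= i <= n - 1)%nat /\ x = bsum a i.

Definition irreducible (n : nat) (tau : nat -> nat) : Prop :=
  forall j, (1 <= j <= n - 1)%nat ->
    ~ ((forall i, (1 <= i <= j)%nat -> (1 <= tau i <= j)%nat) /\
       (forall m, (1 <= m <= j)%nat -> exists i, (1 <= i <= j)%nat /\ tau i = m)).

Definition split_perm (n : nat) (tau : nat -> nat) : Prop :=
  forall j, (1 <= j <= n - 1)%nat -> tau (S j) <> (tau j + 1)%nat.

Definition fully_split (n : nat) (tau tauinv : nat -> nat) : Prop :=
  split_perm n tau /\ tau 1%nat <> (tau n + 1)%nat /\
  tauinv 1%nat <> (tauinv n + 1)%nat.

Definition keane (n : nat) (a : nat -> R) (tau tauinv : nat -> nat) : Prop :=
  forall (k : nat), (1 <= k)%nat ->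
    forall x, inD n a x -> ~ inD n a (Nat.iter k (IET n a tau tauinv) x).

Definition inDinf (n : nat) (a : nat -> R) (tau tauinv : nat -> nat) (x : R) : Prop :=
  x = 0 \/ x = 1 \/
  exists (k : Z) (d : R), inD n a d /\ Tpow n a tau tauinv k d x.

Definition regular (n : nat) (a : nat -> R) (tau tauinv : nat -> nat) (x : R) : Prop :=
  0 <= x <= 1 /\ ~ inDinf n a tau tauinv x.

Definition word := Z -> nat.

Definition is_itinerary (n : nat) (a : nat -> R) (tau tauinv : nat -> nat)
  (x : R) (alpha : word) : Prop :=
  forall k : Z, (1 <= alpha k <= n)%nat /\
    exists y, Tpow n a tau tauinv k x y /\ inJ a (alpha k) y.

Definition inX0 (n : nat) (a : nat -> R) (tau tauinv : nat -> nat) (alpha : word) : Prop :=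
  exists x, regular n a tau tauinv x /\ is_itinerary n a tau tauinv x alpha.

(* X = closure of X_0 in the product topology of [n]^Z (discrete [n]):
   every cylinder around alpha meets X_0. *)
Definition inX (n : nat) (a : nat -> R) (tau tauinv : nat -> nat) (alpha : word) : Prop :=
  forall M : nat, exists beta, inX0 n a tau tauinv beta /\
    forall k : Z, (Z.abs k <= Z.of_nat M)%Z -> alpha k = beta k.

From Stdlib Require Import Reals ZArith Lra Lia List Permutation FinFun Wf_nat
  Classical ClassicalEpsilon.
Open Scope R_scope.

(** Words of the subshift [X] are, on every finite window, itineraries of
    genuine [T]-orbits.  Suppose [α, β ∈ X] agree outside a finite window and first
    differ at time [m0], say [α_{m0} = i < β_{m0}].  Two facts about [T] conflict:
    - Expansiveness: [T] has no periodic points (Keane), so every interval of length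
      [ℓ] reaches [D] within a bounded time; hence points sharing a long enough code
      are [ℓ]-close.  The common past puts the two orbit points at time [m0] just left
      and just right of the discontinuity [b_i]; the common future makes their images
      under [T^P], [P = N - m0], [ℓ]-close as well.
    - Jump: full splitting and Keane show that the left limit [Gl] of [T^P] at [b_i]
      differs from its value [Gr = T^P(b_i)] (which is also its right limit), so
      those images are about [|Gl - Gr|] apart. *)

Lemma bsum_le_mono (n : nat) (f : nat -> R) :
  (forall i, (1 <= i <= n)%nat -> 0 < f i) ->
  forall p q, (p <= q <= n)%nat -> bsum f p <= bsum f q.
Proof.
  intros Hf p q [Hpq Hqn]. induction Hpq as [|q Hpq IH]; [lra|].
  simpl. specialize (Hf (S q) ltac:(lia)). specialize (IH ltac:(lia)). lra.
Qed.

Lemma bsum_lt_mono (n : nat) (f : nat -> R) :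
  (forall i, (1 <= i <= n)%nat -> 0 < f i) ->
  forall p q, (p < q <= n)%nat -> bsum f p < bsum f q.
Proof.
  intros Hf p [|q] Hpq; [lia|]. simpl.
  assert (bsum f p <= bsum f q) by (apply (bsum_le_mono n); auto; lia).
  specialize (Hf (S q) ltac:(lia)). lra.
Qed.

Lemma bsum_pred (f : nat -> R) (t : nat) : (1 <= t)%nat -> bsum f t = bsum f (t - 1) + f t.
Proof. intros Ht. destruct t as [|t]; [lia|]. simpl. rewrite Nat.sub_0_r. reflexivity. Qed.

(** [bsum] is a list sum, hence invariant under permutation of the summands. *)
Lemma bsum_as_list_sum (f : nat -> R) (k : nat) :
  bsum f k = fold_right Rplus 0 (map f (seq 1 k)).
Proof.
  assert (Hacc : forall l x, fold_right Rplus x l = fold_right Rplus 0 l + x)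
    by (induction l; simpl; intros; [lra|rewrite IHl; lra]).
  induction k as [|k IH]; [reflexivity|].
  rewrite seq_S, map_app, fold_right_app. simpl. rewrite Hacc, <- IH.
  replace (1 + k)%nat with (S k) by lia. lra.
Qed.

Lemma list_sum_perm (l l' : list R) :
  Permutation l l' -> fold_right Rplus 0 l = fold_right Rplus 0 l'.
Proof. induction 1; simpl; lra. Qed.

Lemma btau_total (n : nat) (a : nat -> R) (tau tauinv : nat -> nat) :
  is_perm n tau tauinv -> btau a tauinv n = bsum a n.
Proof.
  intros Hp. unfold btau. rewrite !bsum_as_list_sum.
  replace (map (fun j => a (tauinv j)) (seq 1 n)) with (map a (map tauinv (seq 1 n)))
    by (rewrite map_map; reflexivity).
  apply list_sum_perm, Permutation_map, Permutation_map_same_l.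
  - apply Injective_map_NoDup_in; [|apply seq_NoDup].
    intros x y Hx Hy E. apply in_seq in Hx, Hy.
    destruct (Hp x ltac:(lia)) as (_ & _ & _ & Ex). destruct (Hp y ltac:(lia)) as (_ & _ & _ & Ey).
    rewrite <- Ex, <- Ey, E. reflexivity.
  - intros x Hx. apply in_map_iff in Hx as (y & <- & Hy). apply in_seq in Hy.
    apply in_seq. destruct (Hp y ltac:(lia)) as (_ & Hy' & _). lia.
Qed.

Lemma pigeonhole (N : nat) (f : nat -> nat) :
  (forall j, (j <= N)%nat -> (f j < N)%nat) -> exists i j, (i < j <= N)%nat /\ f i = f j.
Proof.
  intros Hf. apply NNPP. intros Hno.
  assert (Hnodup : NoDup (map f (seq 0 (S N)))).
  { apply Injective_map_NoDup_in; [|apply seq_NoDup].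
    intros i j Hi Hj E. apply in_seq in Hi, Hj.
    destruct (lt_eq_lt_dec i j) as [[Hij|Hij]|Hij]; [|exact Hij|]; exfalso; apply Hno.
    - exists i, j. split; [lia|exact E].
    - exists j, i. split; [lia|symmetry; exact E]. }
  assert (Hincl : incl (map f (seq 0 (S N))) (seq 0 N)).
  { intros x Hx. apply in_map_iff in Hx as (j & <- & Hj). apply in_seq in Hj.
    apply in_seq. specialize (Hf j ltac:(lia)). lia. }
  pose proof (NoDup_incl_length Hnodup Hincl) as Hlen.
  rewrite length_map, !length_seq in Hlen. lia.
Qed.

Lemma uniform_bound (M : nat) (Q : nat -> nat -> Prop) :
  (forall m, (m <= M)%nat -> exists K, Q m K) ->
  (forall m K K', (K <= K')%nat -> Q m K -> Q m K') ->
  exists K, forall m, (m <= M)%nat -> Q m K.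
Proof.
  intros Hex Hmono. induction M as [|M IH].
  - destruct (Hex 0%nat (le_n 0)) as (K & HK). exists K.
    intros m Hm. replace m with 0%nat by lia. exact HK.
  - destruct IH as (K1 & HK1); [intros m Hm; apply Hex; lia|].
    destruct (Hex (S M) (le_n _)) as (K2 & HK2).
    exists (Nat.max K1 K2). intros m Hm. destruct (Nat.eq_dec m (S M)) as [->|Hne].
    + apply (Hmono _ K2); [lia|exact HK2].
    + apply (Hmono _ K1); [lia|apply HK1; lia].
Qed.

Lemma up_cell (x : R) : 0 <= x -> (1 <= up x)%Z /\ IZR (up x) - 1 <= x < IZR (up x).
Proof.
  intros Hx. destruct (archimed x) as [H1 H2]. split; [|lra].
  assert (Hpos : (0 < up x)%Z) by (apply lt_IZR; lra). lia.
Qed.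

Lemma nat_mult_exceeds (c B : R) : 0 < c -> exists k : nat, B < INR k * c.
Proof.
  intros Hc. set (q := Rabs B / c).
  assert (Hq : 0 <= q)
    by (unfold q; apply Rmult_le_pos; [apply Rabs_pos|left; apply Rinv_0_lt_compat; exact Hc]).
  destruct (up_cell q Hq) as [Hup [_ Hlt]].
  exists (Z.to_nat (up q)). rewrite INR_IZR_INZ, Z2Nat.id by lia.
  assert (HB : Rabs B = q * c) by (unfold q; field; lra).
  pose proof (Rle_abs B). nra.
Qed.

Lemma cell_index (h u : R) : 0 < h -> 0 <= u -> exists m : nat, u < INR m * h <= u + h.
Proof.
  intros Hh Hu. assert (Hq : 0 <= u / h) by (apply Rmult_le_pos; [lra|left; apply Rinv_0_lt_compat; lra]).
  destruct (up_cell _ Hq) as [Hup Hcell].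
  exists (Z.to_nat (up (u / h))). rewrite INR_IZR_INZ, Z2Nat.id by lia.
  assert (Hu' : u = u / h * h) by (field; lra). split; nra.
Qed.

Lemma close_pair (lam : R) (s : nat -> R) :
  0 < lam -> (forall j, 0 <= s j < 1) -> exists i j, (i < j)%nat /\ Rabs (s j - s i) < lam.
Proof.
  intros Hlam Hs. set (q := fun j => s j / lam).
  assert (Hq : forall j, 0 <= q j < / lam).
  { intros j. specialize (Hs j). assert (0 < / lam) by (apply Rinv_0_lt_compat; lra).
    unfold q, Rdiv. split; nra. }
  set (cell := fun j => Z.to_nat (up (q j))).
  assert (Hinv : 0 <= / lam) by (left; apply Rinv_0_lt_compat; lra).
  destruct (up_cell _ Hinv) as [Hup_inv Hcell_inv].
  destruct (pigeonhole (S (Z.to_nat (up (/ lam)))) cell) as (i & j & Hij & E).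
  { intros j _. destruct (up_cell (q j) (proj1 (Hq j))) as [Hup Hcell].
    assert (Hlt : (up (q j) < up (/ lam) + 1)%Z)
      by (apply lt_IZR; rewrite plus_IZR; pose proof (Hq j); lra).
    unfold cell. lia. }
  exists i, j. split; [lia|].
  destruct (up_cell (q i) (proj1 (Hq i))) as [Hupi Hcelli].
  destruct (up_cell (q j) (proj1 (Hq j))) as [Hupj Hcellj].
  assert (Hsame : up (q i) = up (q j)) by (unfold cell in E; lia).
  rewrite Hsame in Hcelli.
  assert (Hs_q : forall k, s k = lam * q k) by (intros k; unfold q; field; lra).
  rewrite !Hs_q. apply Rabs_def1; nra.
Qed.

Lemma glb_exists (E : R -> Prop) (m : R) :
  (forall w, E w -> m <= w) -> (exists w, E w) ->
  exists g, (forall w, E w -> g <= w) /\ (forall c, (forall w, E w -> c <= w) -> c <= g).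
Proof.
  intros Hlow [w0 Hw0].
  destruct (completeness (fun y => E (- y))) as (M & HubM & HlubM).
  - exists (- m). intros y Hy. specialize (Hlow _ Hy). lra.
  - exists (- w0). rewrite Ropp_involutive. exact Hw0.
  - exists (- M). split.
    + intros w Hw. assert (- w <= M) by (apply HubM; rewrite Ropp_involutive; exact Hw). lra.
    + intros c Hc. assert (M <= - c) by (apply HlubM; intros y Hy; specialize (Hc _ Hy); lra).
      lra.
Qed.

Lemma first_difference (al be : word) (N : nat) (i : Z) :
  (forall k, (Z.of_nat N <= Z.abs k)%Z -> al k = be k) -> al i <> be i ->
  exists m0, (Z.abs m0 < Z.of_nat N)%Z /\ al m0 <> be m0 /\
    forall j, (j < m0)%Z -> al j = be j.
Proof.
  intros Hfar Hi.
  set (Pd := fun k : nat => al (Z.of_nat k - Z.of_nat N)%Z <> be (Z.of_nat k - Z.of_nat N)%Z).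
  assert (Hfar' : forall m, al m <> be m -> (Z.abs m < Z.of_nat N)%Z).
  { intros m Hm. apply Z.nle_gt. intros Habs. exact (Hm (Hfar m Habs)). }
  destruct (dec_inh_nat_subset_has_unique_least_element Pd) as (k0 & [Hk0 Hleast] & _).
  - intros k. apply classic.
  - exists (Z.to_nat (i + Z.of_nat N)). unfold Pd.
    specialize (Hfar' i Hi). replace (Z.of_nat (Z.to_nat (i + Z.of_nat N)) - Z.of_nat N)%Z with i by lia.
    exact Hi.
  - exists (Z.of_nat k0 - Z.of_nat N)%Z. split; [apply Hfar'; exact Hk0|split; [exact Hk0|]].
    intros j Hj. apply NNPP. intros Hne. specialize (Hfar' j Hne).
    assert (Hle : (k0 <= Z.to_nat (j + Z.of_nat N))%nat).
    { apply Hleast. unfold Pd.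
      replace (Z.of_nat (Z.to_nat (j + Z.of_nat N)) - Z.of_nat N)%Z with j by lia. exact Hne. }
    lia.
Qed.

Section IntervalExchange.
Variables (n : nat) (a : nat -> R) (tau tauinv : nat -> nat).
Hypotheses (Hn : (2 <= n)%nat) (Hpos : forall i, (1 <= i <= n)%nat -> 0 < a i)
  (Hsum : bsum a n = 1) (Hperm : is_perm n tau tauinv)
  (Hirr : irreducible n tau) (Hfs : fully_split n tau tauinv) (Hkeane : keane n a tau tauinv).

Local Notation T := (IET n a tau tauinv).
Local Notation b := (bsum a).
Local Notation bt := (btau a tauinv).
Local Notation it k x := (Nat.iter k T x).

Lemma b_le p q : (p <= q <= n)%nat -> b p <= b q.
Proof. apply (bsum_le_mono n); exact Hpos. Qed.

Lemma b_lt p q : (p < q <= n)%nat -> b p < b q.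
Proof. apply (bsum_lt_mono n); exact Hpos. Qed.

Lemma b_lt_inv p q : (p <= n)%nat -> (q <= n)%nat -> b p < b q -> (p < q)%nat.
Proof.
  intros Hp Hq Hb. destruct (Nat.lt_ge_cases p q) as [|Hqp]; [assumption|].
  assert (b q <= b p) by (apply b_le; lia). lra.
Qed.

Lemma b_inj p q : (p <= n)%nat -> (q <= n)%nat -> b p = b q -> p = q.
Proof.
  intros Hp Hq E. destruct (lt_eq_lt_dec p q) as [[Hpq|Hpq]|Hpq]; [|exact Hpq|];
    [assert (b p < b q) by (apply b_lt; lia)|assert (b q < b p) by (apply b_lt; lia)]; lra.
Qed.

Lemma b_range t : (t <= n - 1)%nat -> 0 <= b t < 1.
Proof.
  intros Ht. split; [apply (b_le 0); lia|]. rewrite <- Hsum. apply b_lt. lia.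
Qed.

Lemma a_tauinv_pos i : (1 <= i <= n)%nat -> 0 < a (tauinv i).
Proof. intros Hi. apply Hpos. destruct (Hperm i Hi) as (_ & H & _). exact H. Qed.

Lemma bt_le p q : (p <= q <= n)%nat -> bt p <= bt q.
Proof. apply (bsum_le_mono n). exact a_tauinv_pos. Qed.

Lemma bt_lt p q : (p < q <= n)%nat -> bt p < bt q.
Proof. apply (bsum_lt_mono n). exact a_tauinv_pos. Qed.

Lemma bt_n : bt n = 1.
Proof. rewrite (btau_total n a tau tauinv Hperm). exact Hsum. Qed.

Lemma bt_tau t : (1 <= t <= n)%nat -> bt (tau t) = bt (tau t - 1) + a t.
Proof.
  intros Ht. destruct (Hperm t Ht) as (Htau & _ & E & _).
  unfold btau. rewrite (bsum_pred _ (tau t)) by lia. rewrite E. reflexivity.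
Qed.

Lemma inJ_exists x : 0 <= x < 1 -> exists t, (1 <= t <= n)%nat /\ inJ a t x.
Proof.
  intros Hx.
  assert (H : forall k, (k <= n)%nat -> x < b k -> exists t, (1 <= t <= k)%nat /\ inJ a t x).
  { induction k as [|k IH]; intros Hk Hxk; simpl in Hxk; [lra|].
    destruct (Rle_lt_dec (b k) x).
    - exists (S k). split; [lia|]. unfold inJ. simpl. rewrite Nat.sub_0_r. lra.
    - destruct (IH ltac:(lia) r) as (t & Ht & HJ). exists t. split; [lia|exact HJ]. }
  apply (H n); [lia|lra].
Qed.

Lemma Tloop_J k t x : (k <= n)%nat -> (1 <= t <= k)%nat -> inJ a t x ->
  Tloop a tau tauinv k x = x - b (t - 1) + bt (tau t - 1).
Proof.
  induction k as [|k IH]; intros Hk Ht HJ; [lia|]. simpl.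
  destruct (Rle_dec (b k) x) as [Hle|Hgt].
  - assert (t = S k).
    { destruct (Nat.eq_dec t (S k)) as [|Hne]; [assumption|]. unfold inJ in HJ.
      assert (b t <= b k) by (apply b_le; lia). lra. }
    subst t. simpl. rewrite Nat.sub_0_r. reflexivity.
  - apply IH; [lia| |exact HJ]. destruct (Nat.eq_dec t (S k)) as [->|]; [|lia].
    unfold inJ in HJ. simpl in HJ. rewrite Nat.sub_0_r in HJ. lra.
Qed.

Lemma T_J t x : (1 <= t <= n)%nat -> inJ a t x -> T x = x - b (t - 1) + bt (tau t - 1).
Proof. intros Ht HJ. apply Tloop_J; [lia|lia|exact HJ]. Qed.

Lemma T_left_end t : (1 <= t <= n)%nat -> T (b (t - 1)) = bt (tau t - 1).
Proof.
  intros Ht. assert (HJ : inJ a t (b (t - 1))) by (split; [lra|apply b_lt; lia]).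
  rewrite (T_J t _ Ht HJ). lra.
Qed.

Lemma T_range_J t x : (1 <= t <= n)%nat -> inJ a t x -> bt (tau t - 1) <= T x < bt (tau t).
Proof.
  intros Ht HJ. rewrite (T_J t x Ht HJ), (bt_tau t Ht). unfold inJ in HJ.
  rewrite (bsum_pred a t) in HJ by lia. lra.
Qed.

Lemma T_range x : 0 <= x < 1 -> 0 <= T x < 1.
Proof.
  intros Hx. destruct (inJ_exists x Hx) as (t & Ht & HJ). pose proof (T_range_J t x Ht HJ).
  destruct (Hperm t Ht) as (Htau & _).
  assert (0 <= bt (tau t - 1)) by (apply (bt_le 0); lia).
  assert (bt (tau t) <= 1) by (rewrite <- bt_n; apply bt_le; lia). lra.
Qed.

Lemma tau_inj i j : (1 <= i <= n)%nat -> (1 <= j <= n)%nat -> tau i = tau j -> i = j.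
Proof.
  intros Hi Hj E. destruct (Hperm i Hi) as (_ & _ & Ei & _). destruct (Hperm j Hj) as (_ & _ & Ej & _).
  rewrite <- Ei, <- Ej, E. reflexivity.
Qed.

Lemma T_inj x y : 0 <= x < 1 -> 0 <= y < 1 -> T x = T y -> x = y.
Proof.
  intros Hx Hy E. destruct (inJ_exists x Hx) as (t & Ht & HJt).
  destruct (inJ_exists y Hy) as (s & Hs & HJs).
  destruct (Nat.eq_dec t s) as [<-|Hts].
  - rewrite (T_J t x Ht HJt), (T_J t y Ht HJs) in E. lra.
  - pose proof (T_range_J t x Ht HJt). pose proof (T_range_J s y Hs HJs).
    destruct (Hperm t Ht) as (Ht1 & _). destruct (Hperm s Hs) as (Hs1 & _).
    assert (tau t <> tau s) by (intros E'; apply Hts; exact (tau_inj t s Ht Hs E')).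
    destruct (Nat.lt_ge_cases (tau t) (tau s)).
    + assert (bt (tau t) <= bt (tau s - 1)) by (apply bt_le; lia). lra.
    + assert (bt (tau s) <= bt (tau t - 1)) by (apply bt_le; lia). lra.
Qed.

Lemma it_range k x : 0 <= x < 1 -> 0 <= it k x < 1.
Proof. intros Hx. induction k; simpl; [exact Hx|apply T_range; exact IHk]. Qed.

Lemma it_inj k x y : 0 <= x < 1 -> 0 <= y < 1 -> it k x = it k y -> x = y.
Proof.
  induction k as [|k IH]; simpl; intros Hx Hy E; [exact E|].
  apply IH; [exact Hx|exact Hy|]. apply T_inj; [apply it_range..|]; assumption.
Qed.

Lemma it_comm j k x : it j (it k x) = it k (it j x).
Proof. rewrite <- !Nat.iter_add, Nat.add_comm. reflexivity. Qed.

Lemma it_S k x : it (S k) x = it k (T x).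
Proof. rewrite <- Nat.add_1_r, Nat.iter_add. reflexivity. Qed.

Definition right_translation (k : nat) (x : R) : Prop :=
  exists d, 0 < d /\ forall e, 0 <= e < d -> it k (x + e) = it k x + e.

(** [T^k] maps a left neighbourhood of [x] by translation onto a left neighbourhood
    of [G]; then [G] is the left limit of [T^k] at [x]. *)
Definition left_translation (k : nat) (x G : R) : Prop :=
  exists d, 0 < d /\ forall e, 0 < e < d -> it k (x - e) = G - e.

(** The intervals [J_t] are closed on the left, so every [T^k] is right continuous. *)
Lemma right_translation_iter k x : 0 <= x < 1 -> right_translation k x.
Proof.
  intros Hx. induction k as [|k (d & Hd & Htr)].
  - exists 1. split; [lra|]. intros; reflexivity.
  - destruct (inJ_exists (it k x) (it_range k x Hx)) as (t & Ht & HJ).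
    set (d' := Rmin d (b t - it k x)).
    assert (Hd' : 0 < d' /\ d' <= d /\ d' <= b t - it k x).
    { unfold inJ in HJ. split; [apply Rmin_pos; lra|split; [apply Rmin_l|apply Rmin_r]]. }
    exists d'. split; [lra|]. intros e He. simpl. rewrite Htr by lra.
    assert (HJe : inJ a t (it k x + e)) by (unfold inJ in *; lra).
    rewrite (T_J t _ Ht HJe), (T_J t _ Ht HJ). lra.
Qed.

Lemma left_translation_cons k x y G :
  left_translation 1 x y -> left_translation k y G -> left_translation (S k) x G.
Proof.
  intros (d1 & Hd1 & H1) (d2 & Hd2 & H2). exists (Rmin d1 d2).
  split; [apply Rmin_pos; lra|]. intros e He.
  pose proof (Rmin_l d1 d2). pose proof (Rmin_r d1 d2).
  rewrite it_S. change (T (x - e)) with (it 1 (x - e)). rewrite H1 by lra. apply H2. lra.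
Qed.

Lemma left_translation_T x : 0 < x < 1 -> ~ inD n a x -> left_translation 1 x (T x).
Proof.
  intros Hx HD. destruct (inJ_exists x ltac:(lra)) as (t & Ht & HJ).
  assert (Hint : b (t - 1) < x).
  { unfold inJ in HJ. destruct (Req_dec (b (t - 1)) x) as [E|]; [|lra]. exfalso.
    destruct (Nat.eq_dec t 1) as [->|Ht1]; [simpl in E; lra|].
    apply HD. exists (t - 1)%nat. split; [lia|symmetry; exact E]. }
  exists (x - b (t - 1)). split; [lra|]. intros e He.
  assert (HJe : inJ a t (x - e)) by (unfold inJ in *; lra).
  simpl. rewrite (T_J t _ Ht HJe), (T_J t _ Ht HJ). lra.
Qed.

Lemma left_translation_iter k x : 0 <= x < 1 ->
  (forall j, (j < k)%nat -> 0 < it j x /\ ~ inD n a (it j x)) ->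
  left_translation k x (it k x).
Proof.
  revert x. induction k as [|k IH]; intros x Hx Havoid.
  - exists 1. split; [lra|]. intros; reflexivity.
  - destruct (Havoid 0%nat ltac:(lia)) as [Hx0 HxD]. simpl in Hx0, HxD.
    rewrite it_S. apply left_translation_cons with (T x).
    + apply left_translation_T; [lra|exact HxD].
    + apply IH; [apply T_range; exact Hx|].
      intros j Hj. rewrite <- it_S. apply Havoid. lia.
Qed.

(** Just left of a discontinuity [b_i], [T] follows the interval [J_i]. *)
Lemma left_translation_endpoint i : (1 <= i <= n)%nat -> left_translation 1 (b i) (bt (tau i)).
Proof.
  intros Hi. exists (a i). split; [apply Hpos; exact Hi|]. intros e He.
  assert (HJ : inJ a i (b i - e)) by (unfold inJ; rewrite (bsum_pred a i) by lia; lra).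
  simpl. rewrite (T_J i _ Hi HJ), (bt_tau i Hi), (bsum_pred a i) by lia. lra.
Qed.

(** Irreducibility for [j = 1] says [τ(1) ≠ 1], i.e. [τ^{-1}(1) ≥ 2]. *)
Lemma tauinv_1 : (2 <= tauinv 1%nat <= n)%nat.
Proof.
  destruct (Hperm 1%nat ltac:(lia)) as (_ & H1 & _ & E).
  destruct (Nat.eq_dec (tauinv 1%nat) 1) as [E1|]; [|lia]. exfalso. rewrite E1 in E.
  apply (Hirr 1%nat ltac:(lia)). split.
  - intros i Hi. replace i with 1%nat by lia. lia.
  - intros m Hm. exists 1%nat. split; lia.
Qed.

Definition d0 : R := b (tauinv 1%nat - 1).

Lemma d0_D : inD n a d0.
Proof. pose proof tauinv_1. exists (tauinv 1%nat - 1)%nat. split; [lia|reflexivity]. Qed.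

Lemma d0_range : 0 <= d0 < 1.
Proof. pose proof tauinv_1. apply b_range. lia. Qed.

Lemma T_d0 : T d0 = 0.
Proof.
  pose proof tauinv_1. unfold d0. rewrite T_left_end by lia.
  destruct (Hperm 1%nat ltac:(lia)) as (_ & _ & _ & E). rewrite E. reflexivity.
Qed.

(** Keane: points of [D], and hence [0 = T d0], are not periodic. *)
Lemma no_fix_D p e : (1 <= p)%nat -> inD n a e -> it p e <> e.
Proof. intros Hp He E. apply (Hkeane p Hp e He). rewrite E. exact He. Qed.

Lemma no_fix_0 p : (1 <= p)%nat -> it p 0 <> 0.
Proof.
  intros Hp E. apply (no_fix_D p d0 Hp d0_D). apply T_inj; [apply it_range, d0_range|apply d0_range|].
  rewrite T_d0. change (T (it p d0)) with (it (S p) d0). rewrite it_S, T_d0. exact E.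
Qed.

Lemma endpoint_orbit_avoids t : (t <= n - 1)%nat -> T (b t) <> 0 ->
  forall j, 0 < it j (T (b t)) /\ ~ inD n a (it j (T (b t))).
Proof.
  intros Ht HT0 j. rewrite <- it_S. pose proof (b_range t Ht) as Hbt.
  assert (Hdisc : forall k, (1 <= k)%nat -> ~ inD n a (it k (b t))).
  { intros k Hk. destruct (Nat.eq_dec t 0) as [->|Ht0].
    - intros HD. apply (Hkeane (S k) ltac:(lia) d0 d0_D). rewrite it_S, T_d0. exact HD.
    - apply Hkeane; [exact Hk|]. exists t. split; [lia|reflexivity]. }
  split; [|apply Hdisc; lia].
  pose proof (it_range (S j) _ Hbt). destruct (Req_dec (it (S j) (b t)) 0) as [E|]; [|lra].
  exfalso. destruct j as [|j]; [exact (HT0 E)|].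
  assert (Ed0 : it (S j) (b t) = d0)
    by (apply T_inj; [apply it_range; exact Hbt|apply d0_range|rewrite T_d0; exact E]).
  apply (Hdisc (S j) ltac:(lia)). rewrite Ed0. exact d0_D.
Qed.

(** If [T^p] fixes [s], consider the largest interval [[w, s]] fixed pointwise by [T^p].
    Its left end [w] is fixed, and since the interval cannot be extended to the left,
    [T^p] is not left continuous at [w]: the orbit of [w] meets [0] or [D] before time [p]. *)
Lemma fixed_interval_left_end p s : (1 <= p)%nat -> 0 <= s < 1 -> it p s = s ->
  exists w, 0 <= w <= s /\ it p w = w /\
    exists j, (j < p)%nat /\ (it j w = 0 \/ inD n a (it j w)).
Proof.
  intros Hp Hs Hfix.
  set (E := fun w => 0 <= w <= s /\ forall z, w <= z <= s -> it p z = z).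
  assert (Hs_E : E s) by (split; [lra|intros z Hz; replace z with s by lra; exact Hfix]).
  destruct (glb_exists E 0) as (w & Hlow & Hgreat); [intros v [Hv _]; lra|exists s; exact Hs_E|].
  assert (Hw : 0 <= w <= s) by (split; [apply Hgreat; intros v [Hv _]; lra|apply Hlow, Hs_E]).
  assert (Habove : forall z, w < z <= s -> it p z = z).
  { intros z Hz. destruct (classic (exists v, E v /\ v <= z)) as [(v & [_ Hv] & Hvz)|Hno].
    - apply Hv. lra.
    - exfalso. assert (z <= w); [|lra]. apply Hgreat. intros v Hv.
      apply Rnot_lt_le. intros Hvz. apply Hno. exists v. split; [exact Hv|lra]. }
  assert (Hwfix : it p w = w).
  { destruct (Req_dec w s) as [->|Hws]; [exact Hfix|].
    destruct (right_translation_iter p w ltac:(lra)) as (d & Hd & Htr).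
    set (e := Rmin (d / 2) ((s - w) / 2)).
    assert (0 < e <= d / 2 /\ e <= (s - w) / 2)
      by (split; [split; [apply Rmin_pos; lra|apply Rmin_l]|apply Rmin_r]).
    specialize (Htr e ltac:(lra)). rewrite Habove in Htr by lra. lra. }
  exists w. split; [exact Hw|split; [exact Hwfix|]].
  apply NNPP. intros Hno.
  assert (Havoid : forall j, (j < p)%nat -> 0 < it j w /\ ~ inD n a (it j w)).
  { intros j Hj. pose proof (it_range j w ltac:(lra)). split.
    - destruct (Req_dec (it j w) 0); [|lra]. exfalso. apply Hno. exists j. auto.
    - intros HD. apply Hno. exists j. auto. }
  assert (Hw0 : 0 < w) by exact (proj1 (Havoid 0%nat ltac:(lia))).
  destruct (left_translation_iter p w ltac:(lra) Havoid) as (d & Hd & Htr).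
  set (e := Rmin (d / 2) (w / 2)).
  assert (0 < e <= d / 2 /\ e <= w / 2)
    by (split; [split; [apply Rmin_pos; lra|apply Rmin_l]|apply Rmin_r]).
  assert (HE : E (w - e)).
  { split; [lra|]. intros z Hz. destruct (Rlt_le_dec z w) as [Hzw|Hzw].
    - replace z with (w - (w - z)) by lra. rewrite Htr, Hwfix by lra. reflexivity.
    - destruct (Req_dec z w) as [->|]; [exact Hwfix|apply Habove; lra]. }
  specialize (Hlow _ HE). lra.
Qed.

Lemma no_periodic p s : (1 <= p)%nat -> 0 <= s < 1 -> it p s <> s.
Proof.
  intros Hp Hs Hfix.
  destruct (fixed_interval_left_end p s Hp Hs Hfix) as (w & Hw & Hwfix & j & Hj & Hhit).
  assert (Hjfix : it p (it j w) = it j w) by (rewrite it_comm, Hwfix; reflexivity).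
  destruct Hhit as [H0|HD].
  - rewrite H0 in Hjfix. exact (no_fix_0 p Hp Hjfix).
  - exact (no_fix_D p _ Hp HD Hjfix).
Qed.

(** If no point of [(u, v)] ever enters [D], every [T^j] translates [(u, v)] rigidly:
    a cut would occur at a point whose image is some [b_t] in [D]. *)
Lemma translation_without_hits u v : 0 <= u -> v <= 1 ->
  (forall y j, u < y < v -> ~ inD n a (it j y)) ->
  forall j w1 w2, u < w1 <= w2 -> w2 < v -> it j w2 = it j w1 + (w2 - w1).
Proof.
  intros Hu Hv Hmiss. induction j as [|j IH]; intros w1 w2 Hw1 Hw2; [simpl; lra|].
  pose proof (IH w1 w2 Hw1 Hw2) as E2.
  pose proof (it_range j w1 ltac:(lra)) as R1. pose proof (it_range j w2 ltac:(lra)) as R2.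
  destruct (inJ_exists _ R1) as (t & Ht & HJ).
  destruct (Rlt_le_dec (it j w1 + (w2 - w1)) (b t)) as [Hin|Hcut].
  - assert (HJ2 : inJ a t (it j w2)) by (unfold inJ in *; lra).
    simpl. rewrite (T_J t _ Ht HJ2), (T_J t _ Ht HJ). lra.
  - exfalso. set (y := w1 + (b t - it j w1)).
    assert (Hy : it j y = b t) by (rewrite (IH w1 y); unfold y, inJ in *; lra).
    assert (Htn : t <> n) by (intros ->; rewrite Hsum in Hcut; lra).
    apply (Hmiss y j); [unfold y, inJ in *; lra|].
    rewrite Hy. exists t. split; [lia|reflexivity].
Qed.

(** Suppose every power of [T] translates the interval [[z, z + λ]] rigidly.  If two
    orbit points [T^i z], [T^j z] (i < j) are [λ]-close, then [T^{j-i}] translates a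
    piece of [[T^i z, T^i z + λ]] by [c = T^j z - T^i z]; iterating, [T^i z + k c] stays
    in [[0,1)] for all [k], so [c = 0] and [T^i z] is periodic. *)
Lemma rigid_recurrence z lam i j : 0 <= z < 1 -> 0 < lam ->
  (forall k r, 0 <= r <= lam -> it k (z + r) = it k z + r) ->
  (i < j)%nat -> Rabs (it j z - it i z) < lam -> it (j - i) (it i z) = it i z.
Proof.
  intros Hz Hlam Hrigid Hij Hclose.
  set (s := fun k => it k z). set (p := (j - i)%nat).
  assert (Hip : (i + p)%nat = j) by (unfold p; lia).
  remember (s j - s i) as c eqn:Hc_def.
  assert (Hs : forall k, 0 <= s k < 1) by (intros k; apply it_range; exact Hz).
  assert (Hshift : forall k x, it k (it i x) = it (i + k) x)
    by (intros k x; rewrite <- Nat.iter_add, Nat.add_comm; reflexivity).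
  assert (Hjump : forall r, 0 <= r <= lam -> it p (s i + r) = s i + r + c).
  { intros r Hr. unfold s. rewrite <- Hrigid, Hshift, Hip, !Hrigid by exact Hr.
    rewrite Hc_def. unfold s. lra. }
  assert (Hr0 : exists r0, 0 <= r0 <= lam /\ 0 <= r0 + c <= lam).
  { unfold s in Hc_def. rewrite <- Hc_def in Hclose. apply Rabs_def2 in Hclose.
    destruct (Rle_dec 0 c); [exists 0|exists (- c)]; lra. }
  destruct Hr0 as (r0 & Hr0 & Hr0c).
  assert (Hdrift : forall k, s (i + k * p)%nat = s i + INR k * c).
  { induction k as [|k IH]; [simpl; rewrite Nat.add_0_r; lra|].
    assert (E : it (k * p) (it p (s i + r0)) = s (i + S k * p)%nat + r0).
    { unfold s. rewrite <- (Hrigid i r0), <- (Hrigid (i + S k * p)%nat r0) by exact Hr0.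
      rewrite <- !Nat.iter_add. f_equal. simpl. lia. }
    rewrite Hjump in E by lra. replace (s i + r0 + c) with (s i + (r0 + c)) in E by ring.
    unfold s in E. rewrite <- (Hrigid i (r0 + c) Hr0c), Hshift, (Hrigid _ _ Hr0c) in E.
    fold (s (i + k * p)%nat) (s (i + S k * p)%nat) in E.
    rewrite IH in E. rewrite S_INR. lra. }
  assert (Hc : c = 0).
  { destruct (Rtotal_order c 0) as [Hc|[Hc|Hc]]; [exfalso|exact Hc|exfalso].
    - destruct (nat_mult_exceeds (- c) 1 ltac:(lra)) as (k & Hk).
      pose proof (Hs (i + k * p)%nat) as Hb. pose proof (Hs i). rewrite Hdrift in Hb. lra.
    - destruct (nat_mult_exceeds c 1 Hc) as (k & Hk).
      pose proof (Hs (i + k * p)%nat) as Hb. pose proof (Hs i). rewrite Hdrift in Hb. lra. }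
  pose proof (Hjump 0 ltac:(lra)) as H0. rewrite !Rplus_0_r, Hc, Rplus_0_r in H0. exact H0.
Qed.

(** Every open interval of [[0,1]] contains a point whose forward orbit meets [D]:
    otherwise the interval would be translated rigidly forever, and recurrence
    would produce a periodic point. *)
Lemma hitting u v : 0 <= u < v -> v <= 1 -> exists y j, u < y < v /\ inD n a (it j y).
Proof.
  intros Huv Hv. apply NNPP. intros Hno.
  assert (Hmiss : forall y j, u < y < v -> ~ inD n a (it j y))
    by (intros y j Hy HD; apply Hno; exists y, j; split; assumption).
  pose proof (translation_without_hits u v ltac:(lra) Hv Hmiss) as Htrans.
  set (lam := (v - u) / 3). set (z := u + lam).
  assert (Hlam : 0 < lam) by (unfold lam; lra).
  assert (Hz : 0 <= z < 1) by (unfold z, lam; lra).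
  assert (Hrigid : forall k r, 0 <= r <= lam -> it k (z + r) = it k z + r)
    by (intros k r Hr; rewrite (Htrans k z (z + r)); unfold z, lam in *; lra).
  destruct (close_pair lam (fun k => it k z) Hlam (fun k => it_range k z Hz))
    as (i & j & Hij & Hclose).
  apply (no_periodic (j - i) (it i z)); [lia|apply it_range; exact Hz|].
  exact (rigid_recurrence z lam i j Hz Hlam Hrigid Hij Hclose).
Qed.

(** Uniform version: for intervals of length at least [l], the time needed to reach
    [D] is bounded, by compactness (a grid of cells of width [l/2]). *)
Lemma uniform_hitting l : 0 < l -> exists K, forall u v, 0 <= u -> u + l <= v -> v <= 1 ->
  exists y j, u < y < v /\ (j < K)%nat /\ inD n a (it j y).
Proof.
  intros Hl. set (h := l / 2). assert (Hh : 0 < h) by (unfold h; lra).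
  destruct (nat_mult_exceeds h (1 + h) Hh) as (M & HM).
  set (Q := fun m K => INR m * h < 1 -> exists y j,
    INR m * h < y < INR m * h + h /\ y < 1 /\ (j < K)%nat /\ inD n a (it j y)).
  destruct (uniform_bound M Q) as (K & HK).
  - intros m _. destruct (Rlt_le_dec (INR m * h) 1) as [Hm|Hm].
    + pose proof (pos_INR m).
      destruct (hitting (INR m * h) (Rmin (INR m * h + h) 1)) as (y & j & Hy & HD).
      * split; [nra|apply Rmin_glb_lt; lra].
      * apply Rmin_r.
      * pose proof (Rmin_l (INR m * h + h) 1). pose proof (Rmin_r (INR m * h + h) 1).
        exists (S j). intros _. exists y, j. repeat split; try lra; try lia. exact HD.
    + exists 0%nat. intros Hm'. lra.
  - intros m K K' HKK' HQ Hm. destruct (HQ Hm) as (y & j & Hy & Hy1 & Hj & HD).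
    exists y, j. repeat split; try lra; try lia. exact HD.
  - exists K. intros u v Hu Huv Hv.
    destruct (cell_index h u Hh Hu) as (m & Hm1 & Hm2).
    assert (HmM : (m <= M)%nat).
    { assert (Hlt : INR m < INR M) by nra. apply INR_lt in Hlt. lia. }
    destruct (HK m HmM ltac:(unfold h in *; lra)) as (y & j & Hy & Hy1 & Hj & HD).
    exists y, j. split; [unfold h in *; lra|split; [exact Hj|exact HD]].
Qed.

Definition same_code (K : nat) (c : nat -> nat) (u v : R) : Prop :=
  forall j, (j < K)%nat -> (1 <= c j <= n)%nat /\ inJ a (c j) (it j u) /\ inJ a (c j) (it j v).

Lemma same_code_sym K c u v : same_code K c u v -> same_code K c v u.
Proof. intros Hcode j Hj. destruct (Hcode j Hj) as (Hc & Hu & Hv). auto. Qed.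

Lemma same_code_translation K u v c : u <= v -> same_code K c u v ->
  forall j, (j <= K)%nat -> forall w, u <= w <= v -> it j w = it j u + (w - u).
Proof.
  intros Huv Hcode. induction j as [|j IH]; intros Hj w Hw; [simpl; lra|].
  pose proof (IH ltac:(lia) w Hw) as Ew. pose proof (IH ltac:(lia) v (conj Huv (Rle_refl v))) as Ev.
  destruct (Hcode j ltac:(lia)) as (Hc & HJu & HJv).
  assert (HJw : inJ a (c j) (it j w)) by (unfold inJ in *; lra).
  simpl. rewrite (T_J _ _ Hc HJw), (T_J _ _ Hc HJu). lra.
Qed.

Lemma same_code_distance K u v c : same_code K c u v -> it K v - it K u = v - u.
Proof.
  intros Hcode. destruct (Rle_lt_dec u v) as [Huv|Hvu].
  - rewrite (same_code_translation K u v c Huv Hcode K (le_n K) v) by lra. lra.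
  - rewrite (same_code_translation K v u c ltac:(lra) (same_code_sym _ _ _ _ Hcode) K
      (le_n K) u) by lra. lra.
Qed.

(** Expansiveness: points sharing a long enough code are arbitrarily close, since
    between two far apart points some orbit would cross a point of [D]. *)
Lemma expansive l : 0 < l -> exists K, forall u v c, 0 <= u < 1 -> 0 <= v < 1 ->
  same_code K c u v -> Rabs (v - u) < l.
Proof.
  intros Hl. destruct (uniform_hitting l Hl) as (K & HK). exists K.
  assert (Hord : forall u v c, 0 <= u <= v -> v < 1 -> same_code K c u v -> v - u < l).
  { intros u v c Huv Hv Hcode. apply Rnot_le_lt. intros Hfar.
    destruct (HK u v ltac:(lra) ltac:(lra) ltac:(lra)) as (y & j & Hy & Hj & (t & Ht & Et)).
    destruct (Hcode j Hj) as (Hc & HJu & HJv).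
    rewrite (same_code_translation K u v c ltac:(lra) Hcode j ltac:(lia) y ltac:(lra)) in Et.
    rewrite (same_code_translation K u v c ltac:(lra) Hcode j ltac:(lia) v ltac:(lra)) in HJv.
    unfold inJ in HJu, HJv.
    assert (Hlo : (c j - 1 < t)%nat) by (apply b_lt_inv; [lia|lia|lra]).
    assert (Hhi : (t < c j)%nat) by (apply b_lt_inv; [lia|lia|lra]).
    lia. }
  intros u v c Hu Hv Hcode. destruct (Rle_lt_dec u v).
  - rewrite Rabs_pos_eq by lra. apply (Hord u v c); [lra|lra|exact Hcode].
  - rewrite Rabs_minus_sym, Rabs_pos_eq by lra.
    apply (Hord v u c); [lra|lra|apply same_code_sym; exact Hcode].
Qed.

Lemma successor_endpoint m : (1 <= m < n)%nat ->
  exists t, (t <= n - 1)%nat /\ tau (S t) = S m /\ T (b t) = bt m.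
Proof.
  intros Hm. destruct (Hperm (S m) ltac:(lia)) as (_ & Hr & _ & Er).
  exists (tauinv (S m) - 1)%nat.
  replace (S (tauinv (S m) - 1)) with (tauinv (S m)) by lia.
  split; [lia|split; [exact Er|]].
  rewrite T_left_end, Er by lia. f_equal. lia.
Qed.

Lemma left_translation_at_bt m k : (1 <= m < n)%nat -> left_translation k (bt m) (it k (bt m)).
Proof.
  intros Hm. destruct (successor_endpoint m Hm) as (t & Ht & _ & Et).
  assert (Hbt : bt 0 < bt m) by (apply bt_lt; lia). change (bt 0) with 0 in Hbt.
  rewrite <- Et. apply left_translation_iter; [apply T_range, b_range; exact Ht|].
  intros j _. apply endpoint_orbit_avoids; [exact Ht|lra].
Qed.

(** Jump at [b_i] when [τ(i) < n]: the left limit of [T^P] at [b_i] is [T^P(b_t)] with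
    [τ(t+1) = τ(i)+1]; as [τ] is split, [t ≠ i], so it differs from [T^P(b_i)]. *)
Lemma jump_inner i P : (1 <= i <= n - 1)%nat -> (tau i < n)%nat -> (1 <= P)%nat ->
  exists G, G <> it P (b i) /\ left_translation P (b i) G.
Proof.
  intros Hi Hti HP. destruct (Hperm i ltac:(lia)) as (Hti1 & _).
  destruct (successor_endpoint (tau i) ltac:(lia)) as (t & Ht & Htau & Et).
  destruct P as [|P]; [lia|].
  exists (it P (bt (tau i))). split.
  - rewrite <- Et, it_S. intros E.
    apply it_inj in E; [|apply T_range, b_range; exact Ht|apply T_range, b_range; lia].
    apply T_inj in E; [|apply b_range; exact Ht|apply b_range; lia].
    apply b_inj in E; [|lia|lia]. subst t.
    destruct Hfs as (Hsplit & _). apply (Hsplit i ltac:(lia)). rewrite Htau. lia.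
  - apply left_translation_cons with (bt (tau i)); [apply left_translation_endpoint; lia|].
    apply left_translation_at_bt. lia.
Qed.

(** Jump at [b_i] when [τ(i) = n]: the left side of [b_i] is sent next to [1], and then
    next to [b^τ_{τ(n)} = T(b_t)] with [τ(t+1) = τ(n)+1].  Full splitting gives [t ≥ 1],
    so [b_t ∈ D], and Keane forbids [T(b_i) = b_t]. *)
Lemma jump_top i P : (1 <= i <= n - 1)%nat -> tau i = n -> (1 <= P)%nat ->
  exists G, G <> it P (b i) /\ left_translation P (b i) G.
Proof.
  intros Hi Hti HP.
  assert (Hleft_i : left_translation 1 (b i) 1)
    by (rewrite <- bt_n, <- Hti; apply left_translation_endpoint; lia).
  destruct P as [|[|P]]; [lia| |].
  - exists 1. split; [|exact Hleft_i].
    pose proof (T_range (b i) (b_range i ltac:(lia))). simpl. lra.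
  - destruct (Hperm n ltac:(lia)) as (Htn & _).
    assert (Hm : (1 <= tau n < n)%nat).
    { assert (tau n <> n) by (intros E; rewrite <- Hti in E; apply tau_inj in E; lia). lia. }
    destruct (successor_endpoint (tau n) Hm) as (t & Ht & Htau & Et).
    assert (Ht1 : (1 <= t)%nat).
    { destruct (Nat.eq_dec t 0) as [->|]; [|lia]. exfalso.
      destruct Hfs as (_ & Hf1 & _). apply Hf1. rewrite Htau. lia. }
    exists (it P (bt (tau n))). split.
    + rewrite <- Et, <- it_S, (it_S (S P) (b i)). intros E.
      apply it_inj in E; [|apply b_range; exact Ht|apply T_range, b_range; lia].
      apply (Hkeane 1%nat (le_n 1) (b i)); [exists i; split; [lia|reflexivity]|].
      change (it 1 (b i)) with (T (b i)). rewrite <- E. exists t. split; [lia|reflexivity].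
    + apply left_translation_cons with 1; [exact Hleft_i|].
      apply left_translation_cons with (bt (tau n)).
      * rewrite <- Hsum. apply left_translation_endpoint. lia.
      * apply left_translation_at_bt. exact Hm.
Qed.

Lemma jump_at_discontinuity i P : (1 <= i <= n - 1)%nat -> (1 <= P)%nat ->
  exists G, G <> it P (b i) /\ left_translation P (b i) G.
Proof.
  intros Hi HP. destruct (Hperm i ltac:(lia)) as (Hti & _).
  destruct (Nat.eq_dec (tau i) n) as [Htop|Hinner].
  - exact (jump_top i P Hi Htop HP).
  - apply jump_inner; [exact Hi|lia|exact HP].
Qed.

Definition is_orbit (y : Z -> R) : Prop :=
  (forall k, 0 <= y k < 1) /\ (forall k, y (k + 1)%Z = T (y k)).

Definition codes (g : word) (M : nat) (y : Z -> R) : Prop :=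
  forall k, (Z.abs k <= Z.of_nat M)%Z -> (1 <= g k <= n)%nat /\ inJ a (g k) (y k).

Lemma orbit_shift y : is_orbit y -> forall k m, y (k + Z.of_nat m)%Z = it m (y k).
Proof.
  intros (_ & Hstep) k m. induction m as [|m IH]; [simpl; f_equal; lia|].
  rewrite Nat2Z.inj_succ, <- Z.add_1_r, Z.add_assoc, Hstep, IH. reflexivity.
Qed.

Lemma itinerary_orbit x g : regular n a tau tauinv x -> is_itinerary n a tau tauinv x g ->
  exists y, is_orbit y /\ forall k, (1 <= g k <= n)%nat /\ inJ a (g k) (y k).
Proof.
  intros [Hx Hreg] Hit.
  assert (Hx1 : 0 <= x < 1).
  { split; [lra|]. destruct (Req_dec x 1) as [E|]; [|lra]. exfalso. apply Hreg. right. left. exact E. }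
  set (y := fun k => proj1_sig (constructive_indefinite_description _ (proj2 (Hit k)))).
  assert (Hy : forall k, Tpow n a tau tauinv k x (y k) /\ inJ a (g k) (y k))
    by (intros k; unfold y; destruct (constructive_indefinite_description _ _) as (z & Hz); exact Hz).
  assert (Hfwd : forall k, (0 <= k)%Z -> y k = it (Z.to_nat k) x).
  { intros k Hk. destruct (Hy k) as ([(_ & E)|(Hk' & _)] & _); [symmetry; exact E|lia]. }
  assert (Hbwd : forall k, (k < 0)%Z -> 0 <= y k < 1 /\ it (Z.to_nat (- k)) (y k) = x).
  { intros k Hk. destruct (Hy k) as ([(Hk' & _)|(_ & Hr & E)] & _); [lia|split; assumption]. }
  assert (Hrange : forall k, 0 <= y k < 1).
  { intros k. destruct (Z_lt_le_dec k 0) as [Hk|Hk]; [apply Hbwd; exact Hk|].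
    rewrite Hfwd by exact Hk. apply it_range. exact Hx1. }
  exists y. split; [split; [exact Hrange|]|intros k; split; [apply Hit|apply Hy]].
  intros k. destruct (Z_lt_le_dec k (-1)) as [Hk|Hk].
  - destruct (Hbwd k ltac:(lia)) as (_ & E1). destruct (Hbwd (k + 1)%Z ltac:(lia)) as (_ & E2).
    replace (Z.to_nat (- k)) with (S (Z.to_nat (- (k + 1)))) in E1 by lia.
    rewrite it_S in E1. apply (it_inj (Z.to_nat (- (k + 1))));
      [apply Hrange|apply T_range, Hrange|congruence].
  - destruct (Z.eq_dec k (-1)) as [->|Hk1].
    + destruct (Hbwd (-1)%Z ltac:(lia)) as (_ & E1). simpl in E1.
      rewrite Hfwd by lia. simpl. symmetry. exact E1.
    + rewrite !Hfwd by lia. replace (Z.to_nat (k + 1)) with (S (Z.to_nat k)) by lia. reflexivity.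
Qed.

Lemma inX_orbit g : inX n a tau tauinv g -> forall M, exists y, is_orbit y /\ codes g M y.
Proof.
  intros HX M. destruct (HX M) as (g' & (x & Hreg & Hit) & Hagree).
  destruct (itinerary_orbit x g' Hreg Hit) as (y & Hy & Hcode).
  exists y. split; [exact Hy|]. intros k Hk. rewrite (Hagree k Hk). apply Hcode.
Qed.

Lemma inX_letter g k : inX n a tau tauinv g -> (1 <= g k <= n)%nat.
Proof.
  intros HX. destruct (inX_orbit g HX (Z.to_nat (Z.abs k))) as (y & _ & Hcode).
  apply (Hcode k). lia.
Qed.

Lemma agreement_closeness l K g g' M y y' k :
  (forall u v c, 0 <= u < 1 -> 0 <= v < 1 -> same_code K c u v -> Rabs (v - u) < l) ->
  is_orbit y -> is_orbit y' -> codes g M y -> codes g' M y' ->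
  (Z.abs k + Z.of_nat K <= Z.of_nat M)%Z ->
  (forall j, (k <= j < k + Z.of_nat K)%Z -> g j = g' j) ->
  Rabs (y' k - y k) < l /\ Rabs (y' (k + Z.of_nat K)%Z - y (k + Z.of_nat K)%Z) < l.
Proof.
  intros HK Hy Hy' Hc Hc' HM Hagree.
  assert (Hcode : same_code K (fun j => g (k + Z.of_nat j)%Z) (y k) (y' k)).
  { intros j Hj. rewrite <- (orbit_shift y Hy k j), <- (orbit_shift y' Hy' k j).
    assert (Hwin : (Z.abs (k + Z.of_nat j) <= Z.of_nat M)%Z) by lia.
    destruct (Hc _ Hwin) as (Hg & HJ). destruct (Hc' _ Hwin) as (_ & HJ').
    rewrite <- Hagree in HJ' by lia. split; [exact Hg|split; assumption]. }
  pose proof (HK _ _ _ (proj1 Hy k) (proj1 Hy' k) Hcode) as Hnear.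
  split; [exact Hnear|].
  rewrite (orbit_shift y Hy), (orbit_shift y' Hy'), (same_code_distance _ _ _ _ Hcode).
  exact Hnear.
Qed.

Lemma straddle_separation P i Gl dL dR l x x' :
  (forall e, 0 < e < dL -> it P (b i - e) = Gl - e) ->
  (forall e, 0 <= e < dR -> it P (b i + e) = it P (b i) + e) ->
  x < b i <= x' -> x' - x < l -> l <= dL -> l <= dR ->
  Rabs (Gl - it P (b i)) - l < Rabs (it P x' - it P x).
Proof.
  intros Hleft Hright Hx Hxx' HldL HldR.
  assert (Ex : it P x = Gl - (b i - x)) by (rewrite <- Hleft by lra; f_equal; lra).
  assert (Ex' : it P x' = it P (b i) + (x' - b i)) by (rewrite <- Hright by lra; f_equal; lra).
  rewrite Ex, Ex'. unfold Rabs.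
  destruct (Rcase_abs (Gl - it P (b i))); destruct (Rcase_abs _); lra.
Qed.

(** Let [α, β ∈ X] agree before time [m0] and from time [N > m0]
    on, with [i = α_{m0} < β_{m0}], and let [Gl ≠ Gr] be the left limit and the value of
    [T^P] at [b_i], [P = N - m0].  Choose [ℓ ≤ |Gl - Gr| / 2].  By expansiveness the
    common past forces the points [x, x'] of the two orbits at time [m0] to be
    [ℓ]-close, hence to straddle [b_i]; so [T^P x] and [T^P x'] are more than
    [|Gl - Gr| - ℓ] apart, while the common future forces them to be [ℓ]-close. *)
Lemma no_split_and_merge al be m0 N : inX n a tau tauinv al -> inX n a tau tauinv be ->
  (al m0 < be m0)%nat -> (forall j, (j < m0)%Z -> al j = be j) ->
  (forall j, (N <= j)%Z -> al j = be j) -> (m0 < N)%Z -> False.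
Proof.
  intros Hal Hbe Hlt Hpast Hfut HmN.
  pose proof (inX_letter al m0 Hal) as Hi. pose proof (inX_letter be m0 Hbe) as Hi'.
  set (i := al m0) in *. set (P := Z.to_nat (N - m0)).
  destruct (jump_at_discontinuity i P ltac:(lia) ltac:(unfold P; lia))
    as (Gl & Hjump & dL & HdL & Hleft).
  destruct (right_translation_iter P (b i) (b_range i ltac:(lia))) as (dR & HdR & Hright).
  assert (Hl : exists l, 0 < l /\ l <= dL /\ l <= dR /\ l <= Rabs (Gl - it P (b i)) / 2).
  { assert (0 < Rabs (Gl - it P (b i))) by (apply Rabs_pos_lt; lra).
    exists (Rmin (Rmin dL dR) (Rabs (Gl - it P (b i)) / 2)).
    pose proof (Rmin_l (Rmin dL dR) (Rabs (Gl - it P (b i)) / 2)). pose proof (Rmin_l dL dR).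
    pose proof (Rmin_r (Rmin dL dR) (Rabs (Gl - it P (b i)) / 2)). pose proof (Rmin_r dL dR).
    split; [repeat apply Rmin_pos; lra|lra]. }
  destruct Hl as (l & Hl & HldL & HldR & Hljump).
  destruct (expansive l Hl) as (K & HK).
  set (M := (Z.to_nat (Z.abs m0 + Z.abs N) + 2 * K)%nat).
  destruct (inX_orbit al Hal M) as (y & Hy & Cy). destruct (inX_orbit be Hbe M) as (y' & Hy' & Cy').
  destruct (agreement_closeness l K al be M y y' (m0 - Z.of_nat K)%Z HK Hy Hy' Cy Cy')
    as (_ & Hnow); [unfold M; lia|intros j Hj; apply Hpast; lia|].
  destruct (agreement_closeness l K al be M y y' N HK Hy Hy' Cy Cy')
    as (Hlater & _); [unfold M; lia|intros j Hj; apply Hfut; lia|].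
  replace (m0 - Z.of_nat K + Z.of_nat K)%Z with m0 in Hnow by lia.
  replace N with (m0 + Z.of_nat P)%Z in Hlater by (unfold P; lia).
  rewrite !(orbit_shift y Hy), !(orbit_shift y' Hy') in Hlater.
  destruct (Cy m0 ltac:(unfold M; lia)) as (_ & Jx). destruct (Cy' m0 ltac:(unfold M; lia)) as (_ & Jx').
  fold i in Jx. unfold inJ in Jx, Jx'.
  assert (Hbb : b i <= b (be m0 - 1)) by (apply b_le; lia).
  apply Rabs_def2 in Hnow.
  pose proof (straddle_separation P i Gl dL dR l (y m0) (y' m0) Hleft Hright
    ltac:(lra) ltac:(lra) HldL HldR).
  lra.
Qed.

End IntervalExchange.

Theorem theorem4p6 (n : nat) (a : nat -> R) (tau tauinv : nat -> nat)
  (Hn : (2 <= n)%nat)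
  (Hpos : forall i, (1 <= i <= n)%nat -> 0 < a i)
  (Hsum : bsum a n = 1)
  (Hperm : is_perm n tau tauinv)
  (Hirr : irreducible n tau)
  (Hfs : fully_split n tau tauinv)
  (Hkeane : keane n a tau tauinv) :
  forall alpha beta : word,
    inX n a tau tauinv alpha -> inX n a tau tauinv beta ->
    (exists N : nat, forall i : Z, (Z.of_nat N <= Z.abs i)%Z -> alpha i = beta i) ->
    forall i : Z, alpha i = beta i.
Proof.
  intros al be Hal Hbe (N & Hfar) i. apply NNPP. intros Hne.
  destruct (first_difference al be N i Hfar Hne) as (m0 & Hm0 & Hdiff & Hpast).
  assert (Hfut : forall j, (Z.of_nat N <= j)%Z -> al j = be j) by (intros j Hj; apply Hfar; lia).
  assert (HmN : (m0 < Z.of_nat N)%Z) by lia.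
  apply Nat.lt_gt_cases in Hdiff as [Hlt|Hgt].
  - apply (no_split_and_merge n a tau tauinv) with (al := al) (be := be) (m0 := m0)
      (N := Z.of_nat N); assumption.
  - apply (no_split_and_merge n a tau tauinv) with (al := be) (be := al) (m0 := m0)
      (N := Z.of_nat N); try assumption; intros j Hj; symmetry; auto.
Qed.
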